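(* Let $(b_k)_{k\ge1}$ be positive reals with $\sum_{k=1}^\infty k\,b_k=B^*<\infty$, and let $b_0>0$ be arbitrary. For every $K\ge1$, the multi-resolution LCMM with liquidity parameters $b_0,b_1,\dots,b_K$ has worst-case loss $$\sup_{\boldsymbol\theta\in\mathbb R^{\mathcal Z^*}}\ \sup_{\omega\in\Omega}\bigl[\boldsymbol\theta\cdot\boldsymbol\phi(\omega)-C(\boldsymbol\theta)+C(\mathbf 0)\bigr]\le B^*\log 2,$$ independently of $K$.
   Context: Fix an integer $K\ge1$, $N=2^K$, $\Omega=\{j/N:j=0,\dots,N-1\}$. Let $T^*$ be the complete binary tree of depth $K$ whose nodes are intervals: the root (level $0$) has $I_{\mathit{root}}=[0,1)$, and each node $z$ at level $k<K$ with $I_z=[\alpha_z,\beta_z)$ has children at level $k+1$ with intervals $[\alpha_z,\frac{\alpha_z+\beta_z}2)$ and $[\frac{\alpha_z+\beta_z}2,\beta_z)$. Let $\mathcal Z^*$ be its node set, $\mathcal Z_k$ the nodes at level $k$, $\mathrm{level}(z)$ the level of $z$, and $\mathcal Y^*=\mathcal Z^*\setminus\mathcal Z_K$. Each node $z$ indexes an interval security with payoff $\phi_z(\omega)=1\{\omega\in I_z\}$; $\boldsymbol\phi(\omega)=(\phi_z(\omega))_{z\in\mathcal Z^*}$. With liquidities $b_k>0$, set $B_\ell=\sum_{k=\ell+1}^K b_k$. For $\boldsymbol\theta\in\mathbb R^{\mathcal Z^*}$ let $C_k(\boldsymbol\theta_k)=b_k\log\sum_{z\in\mathcal Z_k}e^{\theta_z/b_k}$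 and $\tilde C(\boldsymbol\theta)=\sum_{k=0}^K C_k(\boldsymbol\theta_k)$. The constraint matrix $\mathbf A\in\mathbb R^{\mathcal Z^*\times\mathcal Y^*}$ has entries $A_{zy}=B_{\mathrm{level}(z)}$ if $z=y$, $-b_{\mathrm{level}(z)}$ if $I_z\subsetneq I_y$, and $0$ otherwise. The multi-resolution LCMM cost function is $C(\boldsymbol\theta)=\inf_{\boldsymbol\eta\in\mathbb R^{\mathcal Y^*}}\tilde C(\boldsymbol\theta+\mathbf A\boldsymbol\eta)$. *)

From HB Require Import structures.
From mathcomp Require Import all_boot all_order all_algebra.
From mathcomp Require Import all_classical all_reals all_analysis.
Set Implicit Arguments. Unset Strict Implicit. Unset Printing Implicit Defensive.
Import Order.TTheory GRing.Theory Num.Theory.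
Local Open Scope classical_set_scope.
Local Open Scope ring_scope.

(* Nodes of the complete binary tree T* of depth K are pairs (k, i) with
   k <= K (the level) and i < 2^k; node (k, i) has interval
   I_(k,i) = [i / 2^k, (i+1) / 2^k).  (This is exactly the recursive
   construction: children of (k,i) are (k+1,2i) and (k+1,2i+1).)
   Vectors indexed by nodes are represented as functions nat -> nat -> R;
   only entries at valid nodes are ever used. *)

Section LCMM.
Variable R : realType.

Definition alpha (k i : nat) : R := i%:R / (2 ^+ k).
Definition beta (k i : nat) : R := i.+1%:R / (2 ^+ k).

Definition omega (K j : nat) : R := j%:R / (2 ^+ K).

Definition phi (k i : nat) (w : R) : R :=
  ((alpha k i <= w) && (w < beta k i))%:R.

Definition strict_sub (kz iz ky iy : nat) : bool :=
  [&& alpha ky iy <= alpha kz iz, beta kz iz <= beta ky iy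
    & (alpha kz iz != alpha ky iy) || (beta kz iz != beta ky iy)].

Definition Bliq (b : nat -> R) (K l : nat) : R := \sum_(l.+1 <= k < K.+1) b k.

Definition Amat (b : nat -> R) (K kz iz ky iy : nat) : R :=
  if (kz == ky) && (iz == iy) then Bliq b K kz
  else if strict_sub kz iz ky iy then - b kz else 0.

Definition Amul (b : nat -> R) (K : nat) (eta : nat -> nat -> R)
  (kz iz : nat) : R :=
  \sum_(ky < K) \sum_(iy < 2 ^ ky) Amat b K kz iz ky iy * eta ky iy.

Definition Ck (b : nat -> R) (k : nat) (theta : nat -> nat -> R) : R :=
  b k * ln (\sum_(i < 2 ^ k) expR (theta k i / b k)).

Definition Ctilde (b : nat -> R) (K : nat) (theta : nat -> nat -> R) : R :=
  \sum_(k < K.+1) Ck b k theta.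

Definition Ccost (b : nat -> R) (K : nat) (theta : nat -> nat -> R) : R :=
  inf [set Ctilde b K (fun k i => theta k i + Amul b K eta k i)
      | eta in [set: nat -> nat -> R]].

Definition dotphi (K : nat) (theta : nat -> nat -> R) (w : R) : R :=
  \sum_(k < K.+1) \sum_(i < 2 ^ k) theta k i * phi k i w.

End LCMM.

From HB Require Import structures.
From mathcomp Require Import all_boot all_order all_algebra.
From mathcomp Require Import all_classical all_reals all_analysis.
From mathcomp Require Import ring lra zify.
Import Order.TTheory GRing.Theory Num.Theory.
Import numFieldNormedType.Exports.
Local Open Scope classical_set_scope.
Local Open Scope ring_scope.

(* Fix the outcome omega_j = j / 2^K.  At every level k it lies in exactly one
   interval, that of the node (k, cell k) with cell k = j %/ 2^(K-k); these
   nodes form the root-to-leaf path of omega_j, and a path node strictly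
   contains another one exactly when it is an ancestor.  Consequently
   (1) theta . phi(omega_j) = sum_k theta_(k, cell k);
   (2) every column of the constraint matrix A sums to 0 along the path
       (B_l = b_(l+1) + ... + b_K), so theta . phi(omega_j) is unchanged by
       theta |-> theta + A eta;
   (3) a log-sum-exp dominates each of its arguments, so
       theta . phi(omega_j) <= Ctilde(theta); with (2) and the definition of
       C as an infimum, theta . phi(omega_j) <= C(theta);
   (4) C(0) <= Ctilde(0) = sum_k b_k log 2^k = (sum_(k<=K) k b_k) log 2, and
       the partial sums of the nonnegative series sum_k k b_k are <= B*.
   Adding (3) and (4) gives the theorem. *)

Lemma ler_natdiv (R : realFieldType) (d : R) (x y : nat) : 0 < d ->
  (x%:R / d <= y%:R / d) = (x <= y)%N.
Proof. by move=> d_gt0; rewrite ler_pM2r ?ler_nat // invr_gt0. Qed.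

Lemma ltr_natdiv (R : realFieldType) (d : R) (x y : nat) : 0 < d ->
  (x%:R / d < y%:R / d) = (x < y)%N.
Proof. by move=> d_gt0; rewrite ltr_pM2r ?ltr_nat // invr_gt0. Qed.

Lemma eqr_natdiv (R : realFieldType) (d : R) (x y : nat) : 0 < d ->
  (x%:R / d == y%:R / d) = (x == y).
Proof. by move=> d_gt0; rewrite eq_le !ler_natdiv // -eqn_leq. Qed.

Lemma block_index (i j P : nat) : (0 < P)%N ->
  (i * P <= j < i.+1 * P)%N = (i == j %/ P)%N.
Proof.
move=> P_gt0; rewrite eqn_leq leq_divRL //.
by rewrite (_ : (j %/ P <= i)%N = (j %/ P < i.+1)%N) // ltn_divLR.
Qed.

Lemma nested_blocks (m P D : nat) : (0 < P)%N -> (1 < D)%N ->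
  [&& m %/ D * (P * D) <= m * P, m.+1 * P <= (m %/ D).+1 * (P * D)
    & (m * P != m %/ D * (P * D)) || (m.+1 * P != (m %/ D).+1 * (P * D))]%N.
Proof.
move=> P_gt0 D_gt1; set n := (m %/ D)%N.
have n_le : (n * D <= m)%N by apply: leq_divM.
have m_lt : (m < n.+1 * D)%N by rewrite ltn_ceil // ltnW.
rewrite !(mulnC P D) !mulnA !leq_mul2r n_le m_lt !orbT /=.
case: (eqVneq (m * P) (n * D * P))%N => //= mP_eq.
by rewrite mulSnr [(n.+1 * D)%N]mulSnr mulnDl mP_eq eqn_add2l ltn_eqF // ltn_Pmull.
Qed.

Section DyadicPath.
Variables (R : realType) (K : nat) (j : 'I_(2 ^ K)).

Lemma dyadic_rescale (k i : nat) : (k <= K)%N ->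
  (i%:R / 2 ^+ k : R) = (i * 2 ^ (K - k))%:R / 2 ^+ K.
Proof.
move=> le_kK; rewrite -{2}(subnKC le_kK) exprD natrM natrX.
have pow_k_neq0 : (2 ^+ k : R) != 0 by rewrite expf_neq0 // pnatr_eq0.
have pow_Kk_neq0 : (2 ^+ (K - k) : R) != 0 by rewrite expf_neq0 // pnatr_eq0.
by field; apply/andP.
Qed.

Let pow2K_gt0 : (0 : R) < 2 ^+ K.
Proof. by rewrite exprn_gt0. Qed.

Definition cell (k : nat) : nat := (j %/ 2 ^ (K - k))%N.

Lemma cell_lt (k : nat) : (k <= K)%N -> (cell k < 2 ^ k)%N.
Proof. by move=> le_kK; rewrite /cell ltn_divLR ?expn_gt0 // -expnD subnKC. Qed.

Definition cell_ord (k : 'I_K.+1) : 'I_(2 ^ k) := Ordinal (@cell_lt k (ltn_ord k)).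

Lemma phi_omega (k i : nat) : (k <= K)%N ->
  phi k i (omega R K j) = (i == cell k)%:R.
Proof.
move=> le_kK; rewrite /phi /alpha /beta /omega !(dyadic_rescale _ _ le_kK).
by rewrite ler_natdiv // ltr_natdiv // block_index ?expn_gt0.
Qed.

Lemma dotphi_omega (x : nat -> nat -> R) :
  dotphi K x (omega R K j) = \sum_(k < K.+1) x k (cell k).
Proof.
apply: eq_bigr => k _; have le_kK : (k <= K)%N by rewrite -ltnS.
rewrite (bigD1 (cell_ord k)) //= phi_omega // eqxx mulr1 big1 ?addr0 // => i.
by rewrite phi_omega // -val_eqE /= => /negbTE ->; rewrite mulr0.
Qed.

Lemma strict_sub_cell_anc (k ky iy : nat) : (k <= K)%N -> (ky <= K)%N ->
  strict_sub R k (cell k) ky iy -> (ky < k)%N && (iy == cell ky).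
Proof.
move=> le_kK le_kyK; rewrite /strict_sub /alpha /beta.
rewrite !(dyadic_rescale _ _ le_kK) !(dyadic_rescale _ _ le_kyK).
rewrite !ler_natdiv // !eqr_natdiv // /cell.
set P := (2 ^ (K - k))%N; set Q := (2 ^ (K - ky))%N; set m := (j %/ P)%N.
have P_gt0 : (0 < P)%N by rewrite expn_gt0.
have m_le : (m * P <= j)%N by apply: leq_divM.
have j_lt : (j < m.+1 * P)%N by apply: ltn_ceil.
move=> /and3P [lo hi strict].
have iy_eq : iy == (j %/ Q)%N.
  rewrite -block_index ?expn_gt0 // (leq_trans lo m_le).
  exact: leq_trans j_lt hi.
rewrite iy_eq andbT ltnNge; apply/negP => le_kky.
have le_QP : (Q <= P)%N by rewrite leq_exp2l // leq_sub2l.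
have le_PQ : (P <= Q)%N.
  move: lo hi; rewrite !mulSnr => lo hi.
  by rewrite -(leq_add2l (m * P)); apply: leq_trans hi _; rewrite leq_add2r.
have PQ : P = Q by apply/eqP; rewrite eqn_leq le_PQ le_QP.
by move: strict; rewrite (eqP iy_eq) -PQ !eqxx.
Qed.

Lemma anc_strict_sub_cell (k ky : nat) : (k <= K)%N -> (ky < k)%N ->
  strict_sub R k (cell k) ky (cell ky).
Proof.
move=> le_kK lt_kyk; have le_kyK : (ky <= K)%N := ltnW (leq_trans lt_kyk le_kK).
rewrite /strict_sub /alpha /beta.
rewrite !(dyadic_rescale _ _ le_kK) !(dyadic_rescale _ _ le_kyK).
rewrite !ler_natdiv // !eqr_natdiv // /cell.
have -> : (2 ^ (K - ky) = 2 ^ (K - k) * 2 ^ (k - ky))%N.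
  by rewrite -expnD; congr (_ ^ _)%N; lia.
rewrite divnMA; apply: nested_blocks; first by rewrite expn_gt0.
by rewrite -{1}(expn0 2) ltn_exp2l // subn_gt0.
Qed.

Lemma strict_sub_cell (k ky iy : nat) : (k <= K)%N -> (ky <= K)%N ->
  strict_sub R k (cell k) ky iy = (ky < k)%N && (iy == cell ky).
Proof.
move=> le_kK le_kyK; apply/idP/idP; first exact: strict_sub_cell_anc.
by move=> /andP [lt_kyk /eqP ->]; apply: anc_strict_sub_cell.
Qed.

(* (2): along the path, each column y = (ky, iy) of A sums to zero, since
   B_ky = b_(ky+1) + ... + b_K cancels the entries -b_k of its descendants. *)
Lemma Amat_path_sum (b : nat -> R) (ky iy : nat) : (ky < K)%N ->
  \sum_(k < K.+1) Amat b K k (cell k) ky iy = 0.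
Proof.
move=> lt_kyK; have le_kyK := ltnW lt_kyK.
case: (eqVneq iy (cell ky)) => [->|iy_off]; last first.
  rewrite big1 // => k _; have le_kK : (k <= K)%N by rewrite -ltnS.
  rewrite /Amat (strict_sub_cell _ _ _ le_kK le_kyK) (negbTE iy_off) !andbF.
  by case: eqVneq => [->|] //=; rewrite eq_sym (negbTE iy_off).
have -> : \sum_(k < K.+1) Amat b K k (cell k) ky (cell ky) =
    \sum_(0 <= k < K.+1) (if k == ky then Bliq b K ky
                          else if (ky < k)%N then - b k else 0).
  rewrite big_mkord; apply: eq_bigr => k _; have le_kK : (k <= K)%N by rewrite -ltnS.
  rewrite /Amat (strict_sub_cell _ _ _ le_kK le_kyK) eqxx andbT.
  by case: eqVneq => [->|] //=; rewrite eqxx.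
rewrite (@big_cat_nat _ _ _ ky) //=; last exact: leq_trans le_kyK (leqnSn K).
rewrite big_nat_cond big1 ?add0r; last first.
  by move=> k /andP [/andP [_ lt_kky] _]; rewrite (ltn_eqF lt_kky) ltnNge ltnW.
rewrite big_ltn ?ltnS // eqxx /Bliq -big_split /= big_nat_cond big1 //.
by move=> k /andP [/andP [lt_kyk _] _]; rewrite lt_kyk gtn_eqF // subrr.
Qed.

Lemma dotphi_Amul (b : nat -> R) (eta : nat -> nat -> R) :
  dotphi K (Amul b K eta) (omega R K j) = 0.
Proof.
rewrite dotphi_omega /Amul exchange_big /= big1 // => ky _.
rewrite exchange_big /= big1 // => iy _.
by rewrite -mulr_suml Amat_path_sum ?mul0r.
Qed.

End DyadicPath.

Lemma dotphi_add (R : realType) (K : nat) (x y : nat -> nat -> R) (v : R) :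
  dotphi K (fun k i => x k i + y k i) v = dotphi K x v + dotphi K y v.
Proof.
rewrite /dotphi -big_split; apply: eq_bigr => k _.
by rewrite -big_split; apply: eq_bigr => i _; rewrite mulrDl.
Qed.

Lemma le_logsumexp (R : realType) (I : finType) (x : I -> R) (c : R) (i0 : I) :
  0 < c -> x i0 <= c * ln (\sum_i expR (x i / c)).
Proof.
move=> c_gt0.
have le_sum : expR (x i0 / c) <= \sum_i expR (x i / c).
  rewrite (bigD1 i0) //= lerDl; apply: sumr_ge0 => i _; exact: expR_ge0.
have sum_gt0 : 0 < \sum_i expR (x i / c) by apply: lt_le_trans le_sum; exact: expR_gt0.
rewrite -ler_pdivrMl // mulrC -{1}(expRK (x i0 / c)).
by rewrite ler_ln ?posrE ?expR_gt0.
Qed.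

Section CostBounds.
Variables (R : realType) (b : nat -> R) (K : nat).
Hypothesis b_gt0 : forall k, 0 < b k.

Definition translates (theta : nat -> nat -> R) : set R :=
  [set Ctilde b K (fun k i => theta k i + Amul b K eta k i)
    | eta in [set: nat -> nat -> R]].

Lemma dotphi_le_Ctilde (j : 'I_(2 ^ K)) (x : nat -> nat -> R) :
  dotphi K x (omega R K j) <= Ctilde b K x.
Proof.
rewrite dotphi_omega /Ctilde; apply: ler_sum => k _; rewrite /Ck.
exact: (@le_logsumexp R _ (fun i : 'I_(2 ^ k) => x k i) (b k) (cell_ord K j k) (b_gt0 k)).
Qed.

Lemma dotphi_lbound (j : 'I_(2 ^ K)) (theta : nat -> nat -> R) :
  lbound (translates theta) (dotphi K theta (omega R K j)).
Proof.
move=> _ [eta _ <-]; rewrite -[X in X <= _]addr0 -(@dotphi_Amul R K j b eta).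
by rewrite -dotphi_add; apply: dotphi_le_Ctilde.
Qed.

Lemma translates0 (theta : nat -> nat -> R) :
  translates theta (Ctilde b K theta).
Proof.
exists (fun _ _ => 0) => //; congr Ctilde; apply/funext => k; apply/funext => i.
rewrite /Amul big1 ?addr0 // => ky _; rewrite big1 // => iy _; exact: mulr0.
Qed.

Lemma dotphi_le_Ccost (j : 'I_(2 ^ K)) (theta : nat -> nat -> R) :
  dotphi K theta (omega R K j) <= Ccost b K theta.
Proof.
by apply: lb_le_inf; [exists (Ctilde b K theta); apply: translates0 | apply: dotphi_lbound].
Qed.

(* C <= Ctilde: Ctilde(theta) is the eta = 0 member of the set, which is
   bounded below by (3) for any outcome. *)
Lemma Ccost_le_Ctilde (theta : nat -> nat -> R) : Ccost b K theta <= Ctilde b K theta.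
Proof.
have j : 'I_(2 ^ K) := Ordinal (expn_gt0 2 K).
apply: ge_inf; last exact: translates0.
by exists (dotphi K theta (omega R K j)); apply: dotphi_lbound.
Qed.

Lemma Ctilde0 : Ctilde b K (fun _ _ => 0) = (\sum_(k < K.+1) k%:R * b k) * ln 2.
Proof.
rewrite mulr_suml; apply: eq_bigr => k _; rewrite /Ck.
under eq_bigr do rewrite mul0r expR0.
by rewrite sumr_const card_ord natrX lnXn // -mulr_natr; ring.
Qed.

End CostBounds.

Lemma partial_sum_le_lim (R : realType) (u : nat -> R) (l : R) (n : nat) :
  (forall k, 0 <= u k) -> series u @ \oo --> l -> \sum_(k < n) u k <= l.
Proof.
move=> u_ge0 cvg_u.
have incr : {homo series u : p q / (p <= q)%N >-> p <= q}.
  by apply: (@nondecreasing_series _ _ xpredT 0) => k _ _; exact: u_ge0.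
have := nondecreasing_cvgn_le incr (cvgP _ cvg_u) n.
by rewrite (cvg_lim (@Rhausdorff R) cvg_u) /series /= big_mkord.
Qed.

Theorem theorem4 (R : realType) (b : nat -> R) (Bstar : R)
  (hb : forall k, 0 < b k)
  (hB : series (fun k => k%:R * b k) @ \oo --> Bstar)
  (K : nat) (hK : (1 <= K)%N)
  (theta : nat -> nat -> R) (j : 'I_(2 ^ K)) :
  dotphi K theta (omega R K j) - Ccost b K theta
    + Ccost b K (fun _ _ => 0) <= Bstar * ln 2.
Proof.
have payoff_le := @dotphi_le_Ccost R b K hb j theta.
have C0_le : Ccost b K (fun _ _ => 0) <= (\sum_(k < K.+1) k%:R * b k) * ln 2.
  by rewrite -Ctilde0; apply: Ccost_le_Ctilde.
have partial_le : \sum_(k < K.+1) k%:R * b k <= Bstar.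
  by apply: partial_sum_le_lim hB => k; rewrite mulr_ge0 // ltW.
have ln2_ge0 : 0 <= ln (2 : R) by rewrite ln_ge0 // ler1n.
have := ler_wpM2r ln2_ge0 partial_le.
lra.
Qed.
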